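(* Let $k\ge1$ and $n_1,\dots,n_k\in\mathbb{Z}$. The word problem for \[ G=\left\langle a,t,b_1,\dots,b_k \;\middle|\; at=ta,\; b_1^{-1}tb_1=a^{n_1}t,\;\dots,\; b_k^{-1}tb_k=a^{n_k}t\right\rangle \] is solvable. *)

From mathcomp Require Import all_boot all_order all_algebra.
Set Implicit Arguments. Unset Strict Implicit. Unset Printing Implicit Defensive.
Import Order.TTheory GRing.Theory Num.Theory.

Inductive prf : Type :=
| PZero
| PSucc
| PProj (i : nat)
| PComp (f : prf) (gs : seq prf)
| PRec (f g : prf)
| PMu (f : prf).

Inductive eval : prf -> seq nat -> nat -> Prop :=
| eval_zero xs : eval PZero xs 0
| eval_succ x xs : eval PSucc (x :: xs) x.+1
| eval_proj i xs : i < size xs -> eval (PProj i) xs (nth 0 xs i)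
| eval_comp f gs xs ys y :
    evals gs xs ys -> eval f ys y -> eval (PComp f gs) xs y
| eval_rec0 f g xs y : eval f xs y -> eval (PRec f g) (0 :: xs) y
| eval_recS f g m xs y z :
    eval (PRec f g) (m :: xs) y -> eval g (m :: y :: xs) z ->
    eval (PRec f g) (m.+1 :: xs) z
| eval_mu f xs m :
    eval f (m :: xs) 0 ->
    (forall j, j < m -> exists2 v, 0 < v & eval f (j :: xs) v) ->
    eval (PMu f) xs m
with evals : seq prf -> seq nat -> seq nat -> Prop :=
| evals_nil xs : evals [::] xs [::]
| evals_cons g gs xs y ys :
    eval g xs y -> evals gs xs ys -> evals (g :: gs) xs (y :: ys).

Definition decidable_nat (P : nat -> Prop) : Prop :=
  exists p : prf, forall x : nat,
    (P x -> eval p [:: x] 1) /\ (~ P x -> eval p [:: x] 0).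

(* A letter (i, true) is the generator x_i, (i, false) is x_i^{-1}. *)
Definition letter := (nat * bool)%type.
Definition word := seq letter.

Definition linv (x : letter) : letter := (x.1, ~~ x.2).

(* Cantor pairing (a bijection nat * nat -> nat). *)
Definition cpair (a b : nat) : nat := ((a + b) * (a + b).+1)./2 + b.

Definition code_letter (x : letter) : nat := (x.1).*2 + x.2.
Fixpoint code_word (w : word) : nat :=
  match w with
  | [::] => 0
  | x :: s => (cpair (code_letter x) (code_word s)).+1
  end.

Inductive pstep (R : seq word) : word -> word -> Prop :=
| pstep_red u v x : pstep R (u ++ x :: linv x :: v) (u ++ v)
| pstep_rel u v r : r \in R -> pstep R (u ++ r ++ v) (u ++ v).

Inductive peq (R : seq word) : word -> word -> Prop :=
| peq_refl w : peq R w w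
| peq_step u v : pstep R u v -> peq R u v
| peq_sym u v : peq R u v -> peq R v u
| peq_trans u v w : peq R u v -> peq R v w -> peq R u w.

Definition word_trivial (R : seq word) (w : word) : Prop := peq R w [::].

(* Generator indices: a = 0, t = 1, b_{i+1} = i + 2 (0 <= i < k).          *)
(* The exponent n_{i+1} is [n i].                                          *)

Definition apow (m : int) : word := nseq `|m|%N (0%N, (0 <= m)%R).

(* a t a^{-1} t^{-1} *)
Definition rel_comm : word := [:: (0, true); (1, true); (0, false); (1, false)].

(* b^{-1} t b (a^{n_i} t)^{-1} = b^{-1} t b t^{-1} a^{-n_i} *)
Definition rel_b (n : nat -> int) (i : nat) : word :=
  [:: (i.+2, false); (1, true); (i.+2, true); (1, false)] ++ apow (- n i)%R.

Definition relators (k : nat) (n : nat -> int) : seq word :=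
  rel_comm :: [seq rel_b n i | i <- iota 0 k].

Definition is_word (k : nat) (w : word) : bool := all (fun x => x.1 < k.+2) w.

Definition word_problem_solvable (k : nat) (R : seq word) : Prop :=
  decidable_nat (fun c => exists w : word,
    [/\ code_word w = c, is_word k w & word_trivial R w]).

From mathcomp Require Import all_boot all_order all_algebra zify ring.
From Stdlib Require Import Setoid Morphisms.
Set Implicit Arguments. Unset Strict Implicit. Unset Printing Implicit Defensive.
Import Order.TTheory GRing.Theory Num.Theory.

(* G is an iterated HNN extension of the free abelian group <a, t>: each b_i
   conjugates the cyclic subgroup <t> onto <a^n_i t>.  Every element is
   represented by a reduced normal form a^x t^y b_i1^(+-1) a^c1 ... with no
   pinch b^s a^0 b^-s, and left multiplication by the generators is an explicit
   action on such forms.  The relators act trivially, while every word w maps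
   the empty form to a form equal to w in G; so w = 1 exactly when w fixes the
   empty form.  On Cantor codes this action is primitive recursive, and
   iterating it along the code of a word decides triviality. *)

(** * Partial recursive functions *)

Definition computable (m : nat) (f : seq nat -> nat) : Prop :=
  exists p, forall xs, size xs = m -> eval p xs (f xs).

Definition computable1 (f : nat -> nat) :=
  computable 1 (fun xs => f (nth 0 xs 0)).
Definition computable2 (f : nat -> nat -> nat) :=
  computable 2 (fun xs => f (nth 0 xs 0) (nth 0 xs 1)).
Definition computable3 (f : nat -> nat -> nat -> nat) :=
  computable 3 (fun xs => f (nth 0 xs 0) (nth 0 xs 1) (nth 0 xs 2)).

Section Computable.
Variable m : nat.

Lemma computable_ext f g :
  computable m f -> (forall xs, size xs = m -> f xs = g xs) -> computable m g.
Proof. by case=> p Hp fg; exists p => xs Hxs; rewrite -fg //; apply: Hp. Qed.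

Lemma computable_proj i : i < m -> computable m (fun xs => nth 0 xs i).
Proof. by move=> im; exists (PProj i) => xs Hxs; apply: eval_proj; rewrite Hxs. Qed.

Fixpoint all_computable (gs : seq (seq nat -> nat)) : Prop :=
  if gs is g :: gs' then computable m g /\ all_computable gs' else True.

Lemma all_computable_evals gs : all_computable gs ->
  exists ps, forall xs, size xs = m -> evals ps xs [seq g xs | g <- gs].
Proof.
elim: gs => [|g gs IH] /=; first by exists [::] => xs _; apply: evals_nil.
case=> [[p Hp] /IH [ps Hps]]; exists (p :: ps) => xs Hxs.
by apply: evals_cons; [apply: Hp | apply: Hps].
Qed.

Lemma computable_comp l f gs : computable l f -> size gs = l -> all_computable gs ->
  computable m (fun xs => f [seq g xs | g <- gs]).
Proof.
case=> p Hp Hgs /all_computable_evals [ps Hps]; exists (PComp p ps) => xs Hxs.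
by apply: eval_comp (Hps _ Hxs) _; apply: Hp; rewrite size_map.
Qed.

Lemma computable_comp1 f g :
  computable1 f -> computable m g -> computable m (fun xs => f (g xs)).
Proof. by move=> Hf Hg; apply: (computable_comp (gs := [:: g]) Hf). Qed.

Lemma computable_comp2 f g1 g2 : computable2 f ->
  computable m g1 -> computable m g2 -> computable m (fun xs => f (g1 xs) (g2 xs)).
Proof. by move=> Hf H1 H2; apply: (computable_comp (gs := [:: g1; g2]) Hf). Qed.

Lemma computable_comp3 f g1 g2 g3 : computable3 f ->
  computable m g1 -> computable m g2 -> computable m g3 ->
  computable m (fun xs => f (g1 xs) (g2 xs) (g3 xs)).
Proof. by move=> Hf H1 H2 H3; apply: (computable_comp (gs := [:: g1; g2; g3]) Hf). Qed.

Lemma computable_succ : computable1 succn.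
Proof. by exists PSucc => [[|x [|]]] //= _; apply: eval_succ. Qed.

Lemma computable_const c : computable m (fun _ => c).
Proof.
elim: c => [|c IH]; first by exists PZero => xs _; apply: eval_zero.
exact: computable_comp1 computable_succ IH.
Qed.

End Computable.

(* Primitive recursion, with the argument order of [PRec]. *)
Fixpoint prec (f g : seq nat -> nat) (j : nat) (xs : seq nat) : nat :=
  if j is j'.+1 then g (j' :: prec f g j' xs :: xs) else f xs.

Lemma computable_prec m f g : computable m f -> computable m.+2 g ->
  computable m.+1 (fun xs => prec f g (head 0 xs) (behead xs)).
Proof.
case=> pf Hf [pg Hg]; exists (PRec pf pg) => [[|j ys]] //= [Hys].
elim: j => [|j IH] /=; first by apply: eval_rec0; apply: Hf.
by apply: eval_recS IH _; apply: Hg; rewrite /= Hys.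
Qed.

Create HintDb computable.
#[export] Hint Resolve computable_succ : computable.

Ltac computable_tac := repeat first
  [ apply: computable_proj; done
  | apply: computable_const
  | apply: computable_comp3; [solve [eauto with computable] | | | ]
  | apply: computable_comp2; [solve [eauto with computable] | | ]
  | apply: computable_comp1; [solve [eauto with computable] | ] ].

Lemma computable_add : computable2 addn.
Proof.
apply: computable_ext (computable_prec (computable_proj (m := 1) (i := 0) erefl)
  (computable_comp1 computable_succ (computable_proj (m := 3) (i := 1) erefl))) _.
by move=> [|j [|y [|]]] //= _; elim: j => //= j ->.
Qed.
#[export] Hint Resolve computable_add : computable.

Lemma computable_pred : computable1 predn.
Proof.
apply: computable_ext (computable_prec (computable_const 0 0)
  (computable_proj (m := 2) (i := 0) erefl)) _.
by move=> [|[|j] [|]] //=.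
Qed.
#[export] Hint Resolve computable_pred : computable.

Lemma computable_sub : computable2 subn.
Proof.
pose rsub j a := a - j.
have Hrsub : computable2 rsub.
  apply: computable_ext (computable_prec (computable_proj (m := 1) (i := 0) erefl)
    (computable_comp1 computable_pred (computable_proj (m := 3) (i := 1) erefl))) _.
  move=> [|j [|y [|]]] //= _; rewrite /rsub.
  by elim: j => /= [|j ->]; rewrite ?subn0 ?subnS.
apply: computable_ext (computable_comp2 Hrsub
  (computable_proj (m := 2) (i := 1) erefl) (computable_proj (m := 2) (i := 0) erefl)) _.
by [].
Qed.
#[export] Hint Resolve computable_sub : computable.

Lemma computable_mul : computable2 muln.
Proof.
apply: computable_ext (computable_prec (computable_const 1 0)
  (computable_comp2 computable_add (computable_proj (m := 3) (i := 1) erefl)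
     (computable_proj (m := 3) (i := 2) erefl))) _.
by move=> [|j [|y [|]]] //= _; elim: j => //= j ->; rewrite mulSn addnC.
Qed.
#[export] Hint Resolve computable_mul : computable.

Definition ifz (c a b : nat) : nat := if c is 0 then a else b.

Lemma computable_ifz : computable3 ifz.
Proof.
apply: computable_ext (computable_prec (computable_proj (m := 2) (i := 0) erefl)
  (computable_proj (m := 4) (i := 3) erefl)) _.
by move=> [|[|j] [|a [|b [|]]]].
Qed.
#[export] Hint Resolve computable_ifz : computable.

Definition eqb_nat (a b : nat) : nat := a == b.
Definition leb_nat (a b : nat) : nat := a <= b.

Lemma computable_eqb : computable2 eqb_nat.
Proof.
apply: (@computable_ext _
  (fun xs => 1 - ((nth 0 xs 0 - nth 0 xs 1) + (nth 0 xs 1 - nth 0 xs 0)))%N).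
  computable_tac.
move=> xs _; rewrite /eqb_nat; case: eqVneq => [->|]; first by rewrite subnn.
by rewrite neq_ltn => /orP [] ?; lia.
Qed.
#[export] Hint Resolve computable_eqb : computable.

Lemma computable_leb : computable2 leb_nat.
Proof.
apply: (@computable_ext _ (fun xs => 1 - (nth 0 xs 0 - nth 0 xs 1))%N); first computable_tac.
by move=> xs _; rewrite /leb_nat; case: leqP => ?; lia.
Qed.
#[export] Hint Resolve computable_leb : computable.

Definition odd_nat (j : nat) : nat := odd j.

Lemma computable_odd : computable1 odd_nat.
Proof.
apply: computable_ext (computable_prec (computable_const 0 0)
  (computable_comp2 computable_sub (computable_const 2 1)
     (computable_proj (m := 2) (i := 1) erefl))) _.
by move=> [|j [|]] //= _; rewrite /odd_nat; elim: j => //= j ->; case: (odd j).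
Qed.
#[export] Hint Resolve computable_odd : computable.

Lemma computable_half : computable1 half.
Proof.
apply: computable_ext (computable_prec (computable_const 0 0)
  (computable_comp2 computable_add (computable_proj (m := 2) (i := 1) erefl)
    (computable_comp1 computable_odd (computable_proj (m := 2) (i := 0) erefl)))) _.
by move=> [|j [|]] //= _; elim: j => //= j ->; rewrite uphalf_half addnC.
Qed.
#[export] Hint Resolve computable_half : computable.

Lemma computable_table (f : nat -> nat) l : computable1 (fun i => if i < l then f i else 0).
Proof.
elim: l => [|l IH]; first exact: computable_const.
apply: (@computable_ext _ (fun xs =>
  ifz (eqb_nat (nth 0 xs 0) l) (if nth 0 xs 0 < l then f (nth 0 xs 0) else 0) (f l))).
  by apply: computable_comp3; [exact: computable_ifz | computable_tac | exact: IH |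
      exact: computable_const].
move=> xs _; rewrite /eqb_nat; case: eqVneq => [->|ne] /=; first by rewrite ltnSn.
by rewrite ltnS [nth 0 xs 0 <= l]leq_eqVlt (negbTE ne).
Qed.

(** * Cantor pairing *)

Fixpoint tri (s : nat) : nat := if s is s'.+1 then tri s' + s'.+1 else 0.

Lemma triE s : tri s = (s * s.+1)./2.
Proof.
suff -> : s * s.+1 = (tri s).*2 by rewrite doubleK.
by elim: s => //= s IH; rewrite doubleD -IH -addnn; nia.
Qed.

Lemma leq_tri : {homo tri : s t / s <= t}.
Proof.
move=> s t; elim: t => [|t IH]; first by rewrite leqn0 => /eqP ->.
by rewrite leq_eqVlt ltnS => /orP [/eqP -> //| /IH] /=; lia.
Qed.

Lemma leq_tri_id s : s <= tri s.
Proof. by elim: s => //= s; lia. Qed.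

Lemma cpairE a b : cpair a b = tri (a + b) + b.
Proof. by rewrite /cpair triE. Qed.

Lemma computable_tri : computable1 tri.
Proof.
apply: computable_ext (computable_prec (computable_const 0 0)
  (computable_comp2 computable_add (computable_proj (m := 2) (i := 1) erefl)
    (computable_comp1 computable_succ (computable_proj (m := 2) (i := 0) erefl)))) _.
by move=> [|j [|]] //= _; elim: j => //= j ->.
Qed.
#[export] Hint Resolve computable_tri : computable.

Lemma computable_cpair : computable2 cpair.
Proof.
apply: (@computable_ext _ (fun xs => tri (nth 0 xs 0 + nth 0 xs 1) + nth 0 xs 1)).
  computable_tac.
by move=> xs _; rewrite cpairE.
Qed.
#[export] Hint Resolve computable_cpair : computable.

(* [tri_count j c] is the number of [s] in [1..j] with [tri s <= c]; for
   [j = c] this is the diagonal [a + b] on which [c = cpair a b] lies. *)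
Fixpoint tri_count (j c : nat) : nat :=
  if j is j'.+1 then tri_count j' c + leb_nat (tri j'.+1) c else 0.

Definition cdiag (c : nat) : nat := tri_count c c.
Definition csnd (c : nat) : nat := c - tri (cdiag c).
Definition cfst (c : nat) : nat := cdiag c - csnd c.

Lemma tri_count_diag j s b : b <= s -> tri_count j (tri s + b) = minn j s.
Proof.
move=> bs; elim: j => [|j IH] /=; first by rewrite min0n.
rewrite IH /leb_nat; case: (ltnP j s) => js.
- by rewrite (leq_trans (leq_tri js)) ?leq_addr //; rewrite !minnE; lia.
- have : tri s + b < tri j.+1 by have := leq_tri js; rewrite /=; lia.
  by rewrite ltnNge => /negbTE ->; rewrite !minnE; lia.
Qed.

Lemma cdiag_pair a b : cdiag (cpair a b) = a + b.
Proof.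
rewrite /cdiag cpairE tri_count_diag ?leq_addl //.
by have := leq_tri_id (a + b); rewrite !minnE; lia.
Qed.

Lemma csnd_pair a b : csnd (cpair a b) = b.
Proof. by rewrite /csnd cdiag_pair cpairE addKn. Qed.

Lemma cfst_pair a b : cfst (cpair a b) = a.
Proof. by rewrite /cfst csnd_pair cdiag_pair addnK. Qed.

Lemma cpair_inj a b a' b' : cpair a b = cpair a' b' -> a = a' /\ b = b'.
Proof.
by move=> e; split; [rewrite -(cfst_pair a b) e cfst_pair | rewrite -(csnd_pair a b) e csnd_pair].
Qed.

Lemma cpair_surj c : exists a b, cpair a b = c.
Proof.
elim: c => [|c [a [b <-]]]; first by exists 0, 0.
case: a => [|a]; [exists b.+1, 0 | exists a, b.+1];
  rewrite !cpairE ?addn0 ?add0n ?addnS ?addSn /=; lia.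
Qed.

Lemma leq_cpair_snd a b : b <= cpair a b.
Proof. by rewrite cpairE leq_addl. Qed.

Lemma cpair_eq0 a b : (cpair a b == 0) = (a == 0) && (b == 0).
Proof.
apply/eqP/andP => [e|[/eqP -> /eqP ->]] //.
by have /cpair_inj [-> ->] : cpair a b = cpair 0 0 by rewrite e.
Qed.

Lemma computable_cdiag : computable1 cdiag.
Proof.
have tri_countC : computable2 tri_count.
  apply: computable_ext (computable_prec (computable_const 1 0)
    (computable_comp2 computable_add (computable_proj (m := 3) (i := 1) erefl)
      (computable_comp2 computable_leb
         (computable_comp1 computable_tri
            (computable_comp1 computable_succ (computable_proj (m := 3) (i := 0) erefl)))
         (computable_proj (m := 3) (i := 2) erefl)))) _.
  by move=> [|j [|c [|]]] //= _; elim: j => //= j ->.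
by rewrite /computable1 /cdiag; computable_tac.
Qed.
#[export] Hint Resolve computable_cdiag : computable.

Lemma computable_csnd : computable1 csnd.
Proof. by rewrite /computable1 /csnd; computable_tac. Qed.
#[export] Hint Resolve computable_csnd : computable.

Lemma computable_cfst : computable1 cfst.
Proof. by rewrite /computable1 /cfst; computable_tac. Qed.
#[export] Hint Resolve computable_cfst : computable.

(** * Normal forms and their action *)

Lemma linvK : involutive linv.
Proof. by case=> g s; rewrite /linv /= negbK. Qed.

(* A syllable [(i, s, c)] stands for [b_(i+1)^(+-1) a^c] (sign given by [s]),
   and a normal form [(x, y, L)] for [a^x t^y] followed by the syllables [L]. *)
Definition syllable := (nat * bool * int)%type.
Definition normal_form := (int * int * seq syllable)%type.

Definition nf0 : normal_form := (0%R, 0%R, [::]).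

Section NormalFormAction.
Local Open Scope ring_scope.
Variable e : nat -> int.

(* The subword [b^s a^0 b^-s], excluded from reduced forms. *)
Definition pinch (s1 s2 : syllable) : bool :=
  [&& s1.2 == 0, (s1.1.1 == s2.1.1)%N & s2.1.2 == ~~ s1.1.2].

Fixpoint reduced (L : seq syllable) : bool :=
  if L is s1 :: ((s2 :: _) as L') then ~~ pinch s1 s2 && reduced L' else true.

Definition sign_int (s : bool) : int := if s then 1 else -1.

(* Left multiplication by a letter, using [b a^x t^y = t^y b a^(x - e y)]
   and [b^-1 a^x t^y = a^(e y) t^y b^-1 a^x]. *)
Definition act (x : letter) (N : normal_form) : normal_form :=
  let: (hx, hy, L) := N in
  match x with
  | (O, s) => (hx + sign_int s, hy, L)
  | (S O, s) => (hx, hy + sign_int s, L)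
  | (S (S i), true) =>
      let c := hx - e i * hy in
      match L with
      | (i', false, c1) :: L' =>
          if (c == 0) && (i' == i)%N then (c1, hy, L') else (0, hy, (i, true, c) :: L)
      | _ => (0, hy, (i, true, c) :: L)
      end
  | (S (S i), false) =>
      match L with
      | (i', true, c1) :: L' =>
          if (hx == 0) && (i' == i)%N then (e i * hy + c1, hy, L')
          else (e i * hy, hy, (i, false, hx) :: L)
      | _ => (e i * hy, hy, (i, false, hx) :: L)
      end
  end.

Definition act_word (w : word) (N : normal_form) : normal_form := foldr act N w.

Lemma reduced_behead s L : reduced (s :: L) -> reduced L.
Proof. by case: L => //= s2 L /andP []. Qed.

Lemma act_reduced x N : reduced N.2 -> reduced (act x N).2.
Proof.
case: N => [[hx hy] L] /= HL; case: x => [[|[|i]] s] //=.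
case: s; case: L HL => [|[[i' e'] c1] L'] //= HL; case: e' HL => HL //=;
  try case: ifP => H //=; try by move/reduced_behead: HL.
all: rewrite HL andbT /pinch /= ?negb_and /= ?orbT //.
all: by move: H; rewrite (eq_sym i'); case: (_ == 0); case: (i == i').
Qed.

Lemma act_word_reduced w N : reduced N.2 -> reduced (act_word w N).2.
Proof. by elim: w => //= x w IH /IH; apply: act_reduced. Qed.

Lemma not_pinch i s c1 j c2 L :
  ~~ pinch (i, s, c1) (j, ~~ s, c2) && L -> (c1 == 0) && (j == i)%N = false.
Proof. by rewrite /pinch /= eqxx andbT (eq_sym j) => /andP [/negbTE]. Qed.

Lemma act_linvK x N : reduced N.2 -> act (linv x) (act x N) = N.
Proof.
case: N => [[hx hy] L] /= HL; case: x => [[|[|i]] s] /=.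
- by congr (_, _, _); case: s; rewrite /sign_int /=; ring.
- by congr (_, _, _); case: s; rewrite /sign_int /=; ring.
case: s => /=.
- case: L HL => [|[[i' e'] c1] L'] HL /=.
    by rewrite eqxx; congr (_, _, _); ring.
  case: e' HL => HL /=.
    by rewrite eqxx /=; congr (_, _, _); ring.
  case: ifP => [/andP [/eqP Hc /eqP Hi]|H] /=; last first.
    by rewrite eqxx /=; congr (_, _, _); ring.
  subst i'; have Hx : hx = e i * hy by apply/eqP; rewrite -subr_eq0 Hc.
  case: L' HL => [|[[i'' e''] c2] L''] HL /=; first by rewrite Hx.
  case: e'' HL => HL /=; last by rewrite Hx.
  by rewrite (not_pinch (s := false) HL) Hx.
- case: L HL => [|[[i' e'] c1] L'] HL /=; first by rewrite subrr eqxx.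
  case: e' HL => HL /=; last by rewrite subrr eqxx.
  case: ifP => [/andP [/eqP Hc /eqP Hi]|H] /=; last by rewrite subrr eqxx.
  subst i' hx; rewrite addrC addKr.
  case: L' HL => [|[[i'' e''] c2] L''] HL //=.
  by case: e'' HL => HL //=; rewrite (not_pinch (s := true) HL).
Qed.

Lemma act_word_cat u v N : act_word (u ++ v) N = act_word u (act_word v N).
Proof. by rewrite /act_word foldr_cat. Qed.

Lemma act_apow z hx hy L : act_word (apow z) (hx, hy, L) = (hx + z, hy, L).
Proof.
have act_a j s : act_word (nseq j (0%N, s)) (hx, hy, L) = (hx + j%:Z * sign_int s, hy, L).
  elim: j => [|j IH] /=; first by rewrite mul0r addr0.
  by rewrite IH; congr (_, _, _); rewrite -addn1 PoszD; ring.
rewrite /apow act_a; congr (_, _, _); case: z => j /=; first by rewrite mulr1.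
by rewrite NegzE /sign_int /=; ring.
Qed.

Lemma act_rel_comm N : act_word rel_comm N = N.
Proof. by case: N => [[hx hy] L] /=; rewrite /sign_int; congr (_, _, _); ring. Qed.

Lemma act_rel_b n i N : n i = e i -> reduced N.2 -> act_word (rel_b n i) N = N.
Proof.
case: N => [[hx hy] L] /= Hn HL; rewrite act_apow Hn /= /sign_int.
have -> : hx + - e i - e i * (hy - 1) = hx - e i * hy by ring.
case: L HL => [|[[i' e'] c1] L'] HL /=.
  by rewrite subrK eqxx; congr (_, _, _); ring.
case: e' HL => HL /=.
  by rewrite subrK !eqxx; congr (_, _, _); ring.
case: ifP => [/andP [/eqP Hc /eqP Hi]|H] /=; last first.
  by rewrite subrK !eqxx; congr (_, _, _); ring.
subst i'; rewrite subrK; have Hx : hx = e i * hy by apply/eqP; rewrite -subr_eq0 Hc.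
case: L' HL => [|[[i'' e''] c2] L''] HL /=; first by rewrite Hx.
case: e'' HL => HL /=; last by rewrite Hx.
by rewrite (not_pinch (s := false) HL) Hx.
Qed.

Lemma act_word_peq R : (forall r N, r \in R -> reduced N.2 -> act_word r N = N) ->
  forall u v, peq R u v -> forall N, reduced N.2 -> act_word u N = act_word v N.
Proof.
move=> HR u v; elim=> [w|u0 v0 H|u0 v0 _ IH|u0 v0 w0 _ IH1 _ IH2] N HN //.
- case: H => [u1 v1 x|u1 v1 r Hr]; rewrite !act_word_cat /=.
    by have := act_linvK (linv x) (act_word_reduced v1 HN); rewrite linvK => ->.
  by rewrite (HR r) //; apply: act_word_reduced.
- by rewrite IH.
- by rewrite IH1 // IH2.
Qed.

End NormalFormAction.

Definition winv (w : word) : word := rev (map linv w).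

Lemma winvK : involutive winv.
Proof. by move=> w; rewrite /winv map_rev revK -map_comp (eq_map linvK) map_id. Qed.

Lemma is_word_winv k w : is_word k w -> is_word k (winv w).
Proof. by rewrite /is_word /winv all_rev all_map; apply: sub_all. Qed.

Definition gpow (g : nat) (z : int) : word := nseq `|z|%N (g, (0 <= z)%R).

Definition letters_commute R (x y : letter) := forall v, peq R (x :: y :: v) (y :: x :: v).

Section Presentation.
Variable R : seq word.

Lemma peq_ctx p q u v : peq R u v -> peq R (p ++ u ++ q) (p ++ v ++ q).
Proof.
have pstep_ctx u' v' : pstep R u' v' -> pstep R (p ++ u' ++ q) (p ++ v' ++ q).
  case=> [u0 v0 x | u0 v0 r Hr].
    by have := pstep_red R (p ++ u0) (v0 ++ q) x; rewrite -!catA /= -?catA.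
  by have := pstep_rel (p ++ u0) (v0 ++ q) Hr; rewrite -!catA -?catA.
elim=> [w|u0 v0 /pstep_ctx|u0 v0 _|u0 v0 w0 _ IH1 _ IH2].
- exact: peq_refl.
- exact: peq_step.
- exact: peq_sym.
- exact: peq_trans IH1 IH2.
Qed.

#[local] Instance peq_Equivalence : Equivalence (peq R).
Proof. by split; [exact: peq_refl | exact: peq_sym | exact: peq_trans]. Qed.

#[local] Instance cat_peq_Proper : Proper (peq R ==> peq R ==> peq R) cat.
Proof.
move=> u u' Hu v v' Hv; transitivity (u' ++ v); first exact: (peq_ctx [::] v Hu).
by have := peq_ctx u' [::] Hv; rewrite !cats0.
Qed.

#[local] Instance cons_peq_Proper : Proper (eq ==> peq R ==> peq R) cons.
Proof. by move=> x _ <- u v; apply: (cat_peq_Proper (peq_refl R [:: x])). Qed.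

Local Notation "u == v" := (peq R u v) : type_scope.
#[local] Hint Resolve peq_refl : core.

Lemma peq_cancel x v : x :: linv x :: v == v.
Proof. exact: (peq_step (pstep_red R [::] v x)). Qed.

Lemma peq_cancel_inv x v : linv x :: x :: v == v.
Proof. by have := peq_cancel (linv x) v; rewrite linvK. Qed.

Lemma peq_relator r u v : r \in R -> u ++ r ++ v == u ++ v.
Proof. by move=> Hr; apply/peq_step/pstep_rel. Qed.

Lemma word_trivial_winv w : word_trivial R w -> word_trivial R (winv w).
Proof.
have winv_cancel u : winv u ++ u == [::].
  elim: u => [|x u IH] //=.
  rewrite /winv /= rev_cons -cats1 -catA /= -{2}(linvK x) peq_cancel.
  exact: IH.
rewrite /word_trivial => w1; rewrite -(winv_cancel w) -{1}(cats0 (winv w)).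
by apply: cat_peq_Proper; [exact: peq_refl | symmetry].
Qed.

Lemma word_trivial_winvE w : word_trivial R (winv w) <-> word_trivial R w.
Proof. by split=> [/word_trivial_winv|]; rewrite ?winvK //; apply: word_trivial_winv. Qed.

Lemma gpow_step g s z : (g, s) :: gpow g z == gpow g (z + sign_int s)%R.
Proof.
rewrite /gpow /sign_int; case: z => [[|j]|j]; case: s.
- by have -> : (Posz 0 + 1)%R = Posz 1 by lia.
- by have -> : (Posz 0 + -1)%R = Negz 0 by rewrite NegzE; lia.
- by have -> : (Posz j.+1 + 1)%R = Posz j.+2 by lia.
- have -> : (Posz j.+1 + -1)%R = Posz j by lia.
  exact: (peq_cancel (g, false)).
- case: j => [|j].
    have -> : (Negz 0 + 1)%R = Posz 0 by rewrite NegzE; lia.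
    exact: (peq_cancel (g, true)).
  have -> : (Negz j.+1 + 1)%R = Negz j by rewrite !NegzE; lia.
  exact: (peq_cancel (g, true)).
- by have -> : (Negz j + -1)%R = Negz j.+1 by rewrite !NegzE; lia.
Qed.

Lemma gpow_addz g z z' : gpow g z ++ gpow g z' == gpow g (z + z')%R.
Proof.
case: z => j; elim: j => [|j IH].
- by rewrite add0r.
- rewrite [gpow _ _]/= cat_cons IH gpow_step /sign_int.
  by have -> : (Posz j + z' + 1 = Posz j.+1 + z')%R by lia.
- rewrite /= gpow_step /sign_int.
  by have -> : (z' + -1 = Negz 0 + z')%R by rewrite NegzE; lia.
- rewrite [gpow _ (Negz _)]/= cat_cons IH gpow_step /sign_int.
  by have -> : (Negz j + z' + -1 = Negz j.+1 + z')%R by rewrite !NegzE; lia.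
Qed.

Lemma letters_commute_sym x y : letters_commute R x y -> letters_commute R y x.
Proof. by move=> H v; rewrite H. Qed.

Lemma letters_commute_linv x y : letters_commute R x y -> letters_commute R (linv x) y.
Proof.
move=> H v; transitivity (linv x :: y :: x :: linv x :: v); first by rewrite peq_cancel.
by rewrite -H peq_cancel_inv.
Qed.

Lemma letters_commute_nseq x y j v :
  letters_commute R x y -> y :: nseq j x ++ v == nseq j x ++ y :: v.
Proof. by move=> H; elim: j => //= j IH; rewrite -IH -H. Qed.

End Presentation.

(** * The group G *)

Section GroupG.
Variables (k : nat) (n : nat -> int).
Local Notation R := (relators k n).
Local Notation "u == v" := (peq R u v) : type_scope.
#[local] Hint Resolve peq_refl : core.
#[local] Existing Instances peq_Equivalence cat_peq_Proper cons_peq_Proper.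

Definition expo (j : nat) : int := if j < k then n j else 0.

Lemma commute_a_t s s' : letters_commute R (0%N, s) (1%N, s').
Proof.
have Hat : letters_commute R (0%N, true) (1%N, true).
  apply: letters_commute_sym => v.
  have Hr : rel_comm \in R by rewrite /relators inE eqxx.
  transitivity (rel_comm ++ [:: (1%N, true), (0%N, true) & v]).
    by symmetry; apply: (peq_relator [::] _ Hr).
  by rewrite /rel_comm /= (peq_cancel_inv _ (1%N, true)) (peq_cancel_inv _ (0%N, true)).
have Hs : letters_commute R (0%N, s) (1%N, true).
  by case: s; last exact: letters_commute_linv Hat.
apply: letters_commute_sym; case: s'; first exact: letters_commute_sym.
exact: letters_commute_linv (letters_commute_sym Hs).
Qed.

Lemma t_apow_commute s z v : (1%N, s) :: gpow 0 z ++ v == gpow 0 z ++ (1%N, s) :: v.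
Proof. exact/letters_commute_nseq/commute_a_t. Qed.

Lemma tpow_apow_commute z z' v : gpow 1 z' ++ gpow 0 z ++ v == gpow 0 z ++ gpow 1 z' ++ v.
Proof. by rewrite /gpow; elim: `|z'|%N => //= j ->; rewrite t_apow_commute. Qed.

Lemma gpow_split z z' w : gpow 0 z ++ w == gpow 0 z' ++ gpow 0 (z - z')%R ++ w.
Proof. by rewrite catA gpow_addz; have -> : (z' + (z - z') = z)%R by ring. Qed.

Section Stable.
Variables (i : nat) (ik : i < k).
Local Notation m := (n i).
Local Notation b := (i.+2, true).
Local Notation B := (i.+2, false).
Local Notation t := (1%N, true).
Local Notation T := (1%N, false).

Lemma peq_b_apow_t v : b :: gpow 0 m ++ t :: v == t :: b :: v.
Proof.
have rel_b_cancel w : [:: B, t, b, T & gpow 0 (- m)%R ++ w] == w.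
  have rb : rel_b n i \in R.
    by rewrite /relators inE; apply/orP; right; apply/mapP; exists i; rewrite // mem_iota.
  exact: (peq_relator [::] w rb).
symmetry; transitivity (b :: B :: t :: b :: T :: t :: v).
  by rewrite (peq_cancel_inv _ t) (peq_cancel _ b).
rewrite -(rel_b_cancel (gpow 0 m ++ t :: v)).
by rewrite catA gpow_addz; have -> : (- m + m = 0)%R by ring.
Qed.

Lemma peq_b_apow_tinv v : b :: gpow 0 (- m)%R ++ T :: v == T :: b :: v.
Proof.
symmetry; transitivity (T :: b :: gpow 0 m ++ gpow 0 (- m)%R ++ v).
  by rewrite catA gpow_addz; have -> : (m + - m = 0)%R by ring.
rewrite -(peq_cancel _ t (gpow 0 (- m)%R ++ v)) peq_b_apow_t.
by rewrite (peq_cancel_inv _ t) t_apow_commute.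
Qed.

Lemma peq_b_a_tpow y x v :
  b :: gpow 0 x ++ gpow 1 y ++ v == gpow 1 y ++ b :: gpow 0 (x - m * y)%R ++ v.
Proof.
have b_t x' w : b :: gpow 0 x' ++ t :: w == t :: b :: gpow 0 (x' - m)%R ++ w.
  by rewrite (gpow_split x' m) -t_apow_commute peq_b_apow_t.
have b_T x' w : b :: gpow 0 x' ++ T :: w == T :: b :: gpow 0 (x' + m)%R ++ w.
  rewrite (gpow_split x' (- m)%R) -t_apow_commute peq_b_apow_tinv.
  by have -> : (x' - - m = x' + m)%R by ring.
case: y => j; elim: j x => [|j IH] x.
- by rewrite mulr0 subr0.
- rewrite [gpow 1 _]/= !cat_cons b_t IH.
  by have -> : (x - m - m * j = x - m * Posz j.+1)%R by rewrite -addn1 PoszD; ring.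
- rewrite /= b_T.
  by have -> : (x + m = x - m * Negz 0)%R by rewrite NegzE; ring.
- rewrite [gpow 1 (Negz _)]/= !cat_cons b_T IH.
  by have -> : (x + m - m * Negz j = x - m * Negz j.+1)%R by rewrite !NegzE -addn1 PoszD; ring.
Qed.

Lemma peq_binv_a_tpow x y v :
  B :: gpow 0 x ++ gpow 1 y ++ v == gpow 0 (m * y)%R ++ gpow 1 y ++ B :: gpow 0 x ++ v.
Proof.
rewrite -tpow_apow_commute -{1}(peq_cancel_inv _ b (gpow 0 (m * y)%R ++ _)).
by rewrite peq_b_a_tpow subrr peq_cancel.
Qed.

End Stable.

Definition syllable_word (s : syllable) : word := (s.1.1.+2, s.1.2) :: gpow 0 s.2.

Definition nf_word (N : normal_form) : word :=
  gpow 0 N.1.1 ++ gpow 1 N.1.2 ++ flatten (map syllable_word N.2).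

Lemma nf_word_act x N : x.1 < k.+2 -> reduced N.2 ->
  x :: nf_word N == nf_word (act expo x N).
Proof.
case: N => [[hx hy] L]; case: x => [[|[|i]] s] /= ik HL; rewrite /nf_word /=.
- by rewrite -cat_cons gpow_step.
- by rewrite t_apow_commute -cat_cons gpow_step.
have -> : expo i = n i by rewrite /expo (ik : i < k).
case: L HL => [|[[i' e'] c1] L'] HL; case: s => /=.
- exact: peq_b_a_tpow.
- exact: peq_binv_a_tpow.
- rewrite peq_b_a_tpow //; case: e' HL => HL //=.
  case: ifP => [/andP [/eqP Hc /eqP Hi']|] //=; subst i'.
  by rewrite Hc /= (peq_cancel _ (i.+2, true)) tpow_apow_commute.
- rewrite peq_binv_a_tpow //; case: e' HL => HL //=.
  case: ifP => [/andP [/eqP Hc /eqP Hi']|] //=; subst i' hx.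
  by rewrite -[gpow 0 0]/[::] /= (peq_cancel_inv _ (i.+2, true)) tpow_apow_commute catA gpow_addz.
Qed.

Lemma nf_word_act_word w N : is_word k w -> reduced N.2 ->
  w ++ nf_word N == nf_word (act_word expo w N).
Proof.
elim: w => //= x w IH /andP [xk wk] HN.
by rewrite IH // nf_word_act //; apply: act_word_reduced.
Qed.

Lemma act_word_relator r N : r \in R -> reduced N.2 -> act_word expo r N = N.
Proof.
rewrite /relators inE => /orP [/eqP -> _|/mapP [i]]; first exact: act_rel_comm.
by rewrite mem_iota add0n => /andP [_ ik] -> HN; apply: act_rel_b => //; rewrite /expo ik.
Qed.

Lemma word_trivialE w : is_word k w ->
  word_trivial R w <-> act_word expo w nf0 = nf0.
Proof.
move=> wk; split=> [w1|wN].
  by have := act_word_peq act_word_relator w1 (N := nf0) erefl.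
by have := nf_word_act_word wk (N := nf0) erefl; rewrite wN cats0.
Qed.

End GroupG.

(** * Coding normal forms and the decision procedure *)

Definition code_int (z : int) : nat :=
  match z with Posz p => cpair p 0 | Negz q => cpair 0 q.+1 end.

Lemma code_intP z : exists p q, code_int z = cpair p q /\ z = (p%:Z - q%:Z)%R.
Proof.
case: z => j; [exists j, 0 | exists 0, j.+1]; split => //.
  by rewrite subr0.
by rewrite NegzE sub0r.
Qed.

Lemma code_int_eq0 z : (code_int z == 0) = (z == 0%R).
Proof. by case: z => [[|j]|j] //=; rewrite cpairE ?addnS. Qed.

Definition code_diff (p q : nat) : nat := cpair (p - q) (q - p).

Lemma code_diffE p q : code_diff p q = code_int (p%:Z - q%:Z)%R.
Proof.
rewrite /code_diff; case: (leqP q p) => qp.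
  have -> : (p%:Z - q%:Z)%R = Posz (p - q) by lia.
  by rewrite /= (eqP (_ : q - p == 0)) ?subn_eq0.
have -> : (p%:Z - q%:Z)%R = Negz (q - p).-1 by rewrite NegzE; lia.
by rewrite /= prednK ?subn_gt0 // (eqP (_ : p - q == 0)) ?subn_eq0 // ltnW.
Qed.

(* Arithmetic of [int] on codes: a code [cpair p q] stands for [p - q]. *)
Definition code_addz (c d : nat) : nat :=
  code_diff (cfst c + cfst d) (csnd c + csnd d).
Definition code_subz (c d : nat) : nat :=
  code_diff (cfst c + csnd d) (csnd c + cfst d).
Definition code_mulz (c d : nat) : nat :=
  code_diff (cfst c * cfst d + csnd c * csnd d) (cfst c * csnd d + csnd c * cfst d).

Lemma code_addzE a b : code_addz (code_int a) (code_int b) = code_int (a + b)%R.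
Proof.
have [p [q [-> ->]]] := code_intP a; have [p' [q' [-> ->]]] := code_intP b.
by rewrite /code_addz !cfst_pair !csnd_pair code_diffE; congr code_int; rewrite !PoszD; ring.
Qed.

Lemma code_subzE a b : code_subz (code_int a) (code_int b) = code_int (a - b)%R.
Proof.
have [p [q [-> ->]]] := code_intP a; have [p' [q' [-> ->]]] := code_intP b.
by rewrite /code_subz !cfst_pair !csnd_pair code_diffE; congr code_int; rewrite !PoszD; ring.
Qed.

Lemma code_mulzE a b : code_mulz (code_int a) (code_int b) = code_int (a * b)%R.
Proof.
have [p [q [-> ->]]] := code_intP a; have [p' [q' [-> ->]]] := code_intP b.
rewrite /code_mulz !cfst_pair !csnd_pair code_diffE; congr code_int.
by rewrite !PoszD !PoszM; ring.
Qed.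

Lemma computable_code_diff : computable2 code_diff.
Proof. by rewrite /computable2 /code_diff; computable_tac. Qed.
#[export] Hint Resolve computable_code_diff : computable.

Lemma computable_code_addz : computable2 code_addz.
Proof. by rewrite /computable2 /code_addz; computable_tac. Qed.

Lemma computable_code_subz : computable2 code_subz.
Proof. by rewrite /computable2 /code_subz; computable_tac. Qed.

Lemma computable_code_mulz : computable2 code_mulz.
Proof. by rewrite /computable2 /code_mulz; computable_tac. Qed.
#[export] Hint Resolve computable_code_addz computable_code_subz computable_code_mulz
  : computable.

Definition code_syllable (s : syllable) : nat :=
  cpair s.1.1 (cpair s.1.2 (code_int s.2)).

Fixpoint code_syllables (L : seq syllable) : nat :=
  if L is s :: L' then (cpair (code_syllable s) (code_syllables L')).+1 else 0.

Definition code_nf (N : normal_form) : nat :=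
  cpair (cpair (code_int N.1.1) (code_int N.1.2)) (code_syllables N.2).

Lemma code_nf_eq0 N : (code_nf N == 0) = (N == nf0).
Proof.
by case: N => [[hx hy] [|s L]]; rewrite /code_nf /= !cpair_eq0 !code_int_eq0.
Qed.

Definition code_cons (a L : nat) : nat := (cpair a L).+1.
Definition code_head (L : nat) : nat := cfst L.-1.
Definition code_behead (L : nat) : nat := csnd L.-1.
Definition nf_x (N : nat) : nat := cfst (cfst N).
Definition nf_y (N : nat) : nat := csnd (cfst N).
Definition nf_syllables (N : nat) : nat := csnd N.
Definition code_sign (s : nat) : nat := ifz s 2 1.

Lemma code_signE (s : bool) : code_sign s = code_int (sign_int s).
Proof. by case: s. Qed.

Lemma computable_code_cons : computable2 code_cons.
Proof. by rewrite /computable2 /code_cons; computable_tac. Qed.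
Lemma computable_code_head : computable1 code_head.
Proof. by rewrite /computable1 /code_head; computable_tac. Qed.
Lemma computable_code_behead : computable1 code_behead.
Proof. by rewrite /computable1 /code_behead; computable_tac. Qed.
Lemma computable_nf_x : computable1 nf_x.
Proof. by rewrite /computable1 /nf_x; computable_tac. Qed.
Lemma computable_nf_y : computable1 nf_y.
Proof. by rewrite /computable1 /nf_y; computable_tac. Qed.
Lemma computable_nf_syllables : computable1 nf_syllables.
Proof. by rewrite /computable1 /nf_syllables; computable_tac. Qed.
Lemma computable_code_sign : computable1 code_sign.
Proof. by rewrite /computable1 /code_sign; computable_tac. Qed.
#[export] Hint Resolve computable_code_cons computable_code_head computable_code_behead
  computable_nf_x computable_nf_y computable_nf_syllables computable_code_sign : computable.

Section CodedAction.
Variables (k : nat) (n : nat -> int).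

Definition code_expo (j : nat) : nat := if j < k then code_int (n j) else 0.

Lemma code_expoE j : code_expo j = code_int (expo k n j).
Proof. by rewrite /code_expo /expo; case: ifP. Qed.

Lemma computable_code_expo : computable1 code_expo.
Proof. exact: (computable_table (fun j => code_int (n j)) k). Qed.
#[local] Hint Resolve computable_code_expo : computable.

(* [act] by [b_(i+1)] and by its inverse on a coded normal form [N]; the
   [ifz] tests whether the letter cancels against the first syllable. *)
Definition code_act_b (i N : nat) : nat :=
  ifz (eqb_nat (code_subz (nf_x N) (code_mulz (code_expo i) (nf_y N))) 0
         * leb_nat 1 (nf_syllables N)
         * eqb_nat (cfst (code_head (nf_syllables N))) i
         * eqb_nat (cfst (csnd (code_head (nf_syllables N)))) 0)
    (cpair (cpair 0 (nf_y N))
       (code_cons (cpair i (cpair 1 (code_subz (nf_x N) (code_mulz (code_expo i) (nf_y N)))))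
          (nf_syllables N)))
    (cpair (cpair (csnd (csnd (code_head (nf_syllables N)))) (nf_y N))
       (code_behead (nf_syllables N))).

Definition code_act_binv (i N : nat) : nat :=
  ifz (eqb_nat (nf_x N) 0
         * leb_nat 1 (nf_syllables N)
         * eqb_nat (cfst (code_head (nf_syllables N))) i
         * eqb_nat (cfst (csnd (code_head (nf_syllables N)))) 1)
    (cpair (cpair (code_mulz (code_expo i) (nf_y N)) (nf_y N))
       (code_cons (cpair i (cpair 0 (nf_x N))) (nf_syllables N)))
    (cpair (cpair (code_addz (code_mulz (code_expo i) (nf_y N))
                     (csnd (csnd (code_head (nf_syllables N))))) (nf_y N))
       (code_behead (nf_syllables N))).

Definition code_act (g s N : nat) : nat :=
  ifz g (cpair (cpair (code_addz (nf_x N) (code_sign s)) (nf_y N)) (nf_syllables N))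
    (ifz (g - 1) (cpair (cpair (nf_x N) (code_addz (nf_y N) (code_sign s))) (nf_syllables N))
       (ifz s (code_act_binv (g - 2) N) (code_act_b (g - 2) N))).

Lemma computable_code_act : computable3 code_act.
Proof.
have ? : computable2 code_act_b by rewrite /computable2 /code_act_b; computable_tac.
have ? : computable2 code_act_binv by rewrite /computable2 /code_act_binv; computable_tac.
by rewrite /computable3 /code_act; computable_tac.
Qed.

Lemma code_actE g (s : bool) N : code_act g s (code_nf N) = code_nf (act (expo k n) (g, s) N).
Proof.
case: N => [[hx hy] L]; rewrite /code_act /code_nf /nf_x /nf_y /nf_syllables !cfst_pair !csnd_pair.
case: g => [|[|i]] /=; rewrite ?code_signE ?code_addzE //.
rewrite !subSS !subn0; case: s => /=.
- rewrite /code_act_b /eqb_nat /leb_nat /nf_x /nf_y /nf_syllables.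
  rewrite !cfst_pair !csnd_pair code_expoE code_mulzE code_subzE code_int_eq0.
  case: L => [|[[i' e'] c1] L'] /=; first by rewrite muln0.
  rewrite /code_head /code_behead /code_syllable /= !cfst_pair !csnd_pair /= cfst_pair muln1.
  by case: e' => /=; case: (_ == 0%R); case: (i' == i).
- rewrite /code_act_binv /eqb_nat /leb_nat /nf_x /nf_y /nf_syllables.
  rewrite !cfst_pair !csnd_pair code_expoE code_mulzE code_int_eq0.
  case: L => [|[[i' e'] c1] L'] /=; first by rewrite muln0.
  rewrite /code_head /code_behead /code_syllable /= !cfst_pair !csnd_pair /= cfst_pair muln1.
  by rewrite code_addzE; case: e' => /=; case: (_ == 0%R); case: (i' == i).
Qed.

(* A run state is [cpair (code_word w) (cpair flag (code_nf N))], the flag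
   recording that every letter read so far is a generator of [G].  Letters
   are read from the left, so each acts through its inverse and a full run
   computes the action of [winv w]. *)
Definition run_step (st : nat) : nat :=
  ifz (cfst st) st
    (cpair (csnd (cfst st).-1)
       (cpair (cfst (csnd st) * leb_nat (half (cfst (cfst st).-1)).+1 k.+2)
          (code_act (half (cfst (cfst st).-1)) (1 - odd_nat (cfst (cfst st).-1))
             (csnd (csnd st))))).

Lemma computable_run_step : computable1 run_step.
Proof.
have := computable_code_act; rewrite /computable1 /run_step => ?; computable_tac.
Qed.

Lemma run_step_cons x w f N :
  run_step (cpair (code_word (x :: w)) (cpair f (code_nf N))) =
  cpair (code_word w) (cpair (f * (x.1 < k.+2)) (code_nf (act (expo k n) (linv x) N))).
Proof.
rewrite /run_step cfst_pair /= !cfst_pair !csnd_pair /code_letter addnC half_bit_double.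
rewrite /odd_nat oddD odd_double addbF /leb_nat -code_actE.
by rewrite cfst_pair; case: x => g [].
Qed.

Lemma iter_run_step_nil j y : iter j run_step (cpair 0 y) = cpair 0 y.
Proof. by elim: j => //= j ->; rewrite /run_step cfst_pair. Qed.

Lemma iter_run_step w f N j : size w <= j ->
  iter j run_step (cpair (code_word w) (cpair f (code_nf N))) =
  cpair 0 (cpair (f * is_word k w) (code_nf (act_word (expo k n) (winv w) N))).
Proof.
elim: w f N j => [|x w IH] f N j /=; first by rewrite muln1 iter_run_step_nil.
case: j => // j wj; rewrite iterSr run_step_cons IH // -mulnA mulnb.
by rewrite /winv /= rev_cons -cats1 act_word_cat.
Qed.

Definition run (j c : nat) : nat := iter j run_step (cpair c (cpair 1 0)).

Definition decide_trivial (c : nat) : nat :=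
  cfst (csnd (run c c)) * eqb_nat (csnd (csnd (run c c))) 0.

Lemma computable_decide_trivial : computable1 decide_trivial.
Proof.
have ? : computable2 run.
  have Hinit : computable 1 (fun ys => cpair (nth 0 ys 0) (cpair 1 0)) by computable_tac.
  have Hstep : computable 3 (fun ys => run_step (nth 0 ys 1)).
    by apply: computable_comp1 (computable_proj _); [exact: computable_run_step|].
  apply: (computable_ext (computable_prec Hinit Hstep)) => [[|j [|c [|]]]] //= _.
  by rewrite /run; elim: j => //= j ->.
by rewrite /computable1 /decide_trivial; computable_tac.
Qed.

Lemma size_code_word w : size w <= code_word w.
Proof. by elim: w => //= x w IH; rewrite ltnS (leq_trans IH) ?leq_cpair_snd. Qed.

Lemma decide_trivial_code w :
  decide_trivial (code_word w) = is_word k w && (act_word (expo k n) (winv w) nf0 == nf0).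
Proof.
rewrite /decide_trivial /run -[cpair 1 0]/(cpair 1 (code_nf nf0)).
by rewrite iter_run_step ?size_code_word // !csnd_pair cfst_pair /eqb_nat code_nf_eq0 mul1n mulnb.
Qed.

End CodedAction.

Lemma code_letter_inj : injective code_letter.
Proof.
case=> g s [g' s']; rewrite /code_letter /= => e.
have /eqP : (s + g.*2)./2 = (s' + g'.*2)./2 by rewrite addnC e addnC.
rewrite !half_bit_double => /eqP eg; subst g'.
by move/eqP: e; rewrite eqn_add2l; case: s; case: s'.
Qed.

Lemma code_word_inj : injective code_word.
Proof.
elim=> [|x w IH] [|y w'] //= [] /cpair_inj [/code_letter_inj -> /IH ->] //.
Qed.

Lemma code_word_surj c : exists w, code_word w = c.
Proof.
elim: c {-2}c (leqnn c) => [|c IH] [|r] rc; try by exists [::].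
have [a [b ab]] := cpair_surj r.
have bc : b <= c by rewrite -ltnS (leq_trans _ rc) // ltnS -ab leq_cpair_snd.
have [w wb] := IH b bc; exists ((half a, odd a) :: w).
by rewrite /= /code_letter /= addnC odd_double_half wb ab.
Qed.

Lemma decidable_nat_computable (P : nat -> Prop) (f : nat -> bool) :
  computable1 (fun x => f x) -> (forall x, P x <-> f x) -> decidable_nat P.
Proof.
case=> p Hp Pf; exists p => x; have := Hp [:: x] erefl; rewrite /= => px.
case/boolP: (f x) px => fx px; split=> HP //.
  by case: HP; apply/Pf.
by move/Pf: HP; rewrite (negbTE fx).
Qed.

Theorem mainTheorem3 (k : nat) (hk : (1 <= k)%N) (n : nat -> int) :
  word_problem_solvable k (relators k n).
Proof.
apply: (decidable_nat_computable (f := fun c => decide_trivial k n c == 1)).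
  exact: computable_comp2 computable_eqb (computable_decide_trivial k n) (computable_const 1 1).
move=> c; have [w <-] := code_word_surj c; rewrite decide_trivial_code eqb1.
split=> [[w' [/code_word_inj -> wk /word_trivial_winv]]|/andP [wk /eqP w1]].
  by rewrite (word_trivialE _ (is_word_winv wk)) wk => ->.
exists w; split => //.
by rewrite -word_trivial_winvE (word_trivialE _ (is_word_winv wk)).
Qed.
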